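(* As formal power series in $y$ with coefficients in $\mathbb{Q}(x)$, $$\sum_{n=0}^{\infty}H_n(x)y^n=\frac{1-xy(1+y-y^2)}{(1-y)(1-xy)(1-xy-2xy^2)}.$$ In particular, for every $n\geq 0$, $$H_n(x)=\frac{1}{1-3x}+\frac{1}{2}x^n+h_n(x),\qquad h_n(x)=\frac{(\sqrt{2x}\,\mathrm{i})^{n}}{2(1-3x)}\left(8T_n\!\left(-\frac{\sqrt{2x}\,\mathrm{i}}{4}\right)-3(x+3)U_n\!\left(-\frac{\sqrt{2x}\,\mathrm{i}}{4}\right)\right),$$ where $\mathrm{i}^2=-1$ and $T_n$, $U_n$ are the Chebyshev polynomials of the first and second kind (the expressions $(\sqrt{2x}\,\mathrm{i})^nT_n(-\sqrt{2x}\,\mathrm{i}/4)$ and $(\sqrt{2x}\,\mathrm{i})^nU_n(-\sqrt{2x}\,\mathrm{i}/4)$ are polynomials in $x$, so this is an identity of rational functions in $x$).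
   Context: The Stern polynomials $B_n(t)\in\mathbb{Z}[t]$ are defined by $B_0(t)=0$, $B_1(t)=1$, and for $n\geq 1$: $B_{2n}(t)=tB_n(t)$, $B_{2n+1}(t)=B_n(t)+B_{n+1}(t)$. For $n\geq1$ let $e(n)=\deg B_n(t)$, and for $n\ge 0$ let $H_n(x)=\sum_{m=1}^{2^n}x^{e(m)}$. Chebyshev polynomials: $T_n(\cos\theta)=\cos(n\theta)$, $U_n(\cos\theta)=\sin((n+1)\theta)/\sin\theta$; equivalently $\sum_n T_n(a)z^n=(1-az)/(1-2az+z^2)$ and $\sum_n U_n(a)z^n=1/(1-2az+z^2)$. *)

From HB Require Import structures.
From mathcomp Require Import all_boot all_order all_algebra all_field.
Set Implicit Arguments. Unset Strict Implicit. Unset Printing Implicit Defensive.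
Import Order.TTheory GRing.Theory Num.Theory.
Local Open Scope ring_scope.

Fixpoint stern_aux (k n : nat) : {poly int} :=
  match k with
  | 0 => 0
  | k.+1 =>
    if n == 0%N then 0
    else if n == 1%N then 1
    else if odd n then stern_aux k n./2 + stern_aux k n./2.+1
    else 'X * stern_aux k n./2
  end.

Definition stern (n : nat) : {poly int} := stern_aux n n.

Definition sdeg (n : nat) : nat := (size (stern n)).-1.

Definition Hpoly (n : nat) : {poly int} :=
  \sum_(1 <= m < (2 ^ n).+1) 'X^(sdeg m).

Fixpoint cheb_pair (R : nzRingType) (a0 a1 : {poly R}) (n : nat)
  : {poly R} * {poly R} :=
  match n with
  | 0 => (a0, a1)
  | n.+1 => let: (p, q) := cheb_pair a0 a1 n in (q, 2%:R *: 'X * q - p)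
  end.

Definition chebT (R : nzRingType) (n : nat) : {poly R} :=
  (cheb_pair 1 'X n).1.
Definition chebU (R : nzRingType) (n : nat) : {poly R} :=
  (cheb_pair 1 (2%:R *: 'X) n).1.

(* Bivariate setting: outer variable y = 'X, inner variable x = 'X%:P. *)
Definition yv : {poly {poly rat}} := 'X.
Definition xv : {poly {poly rat}} := ('X : {poly rat})%:P.

Definition HQ (n : nat) : {poly rat} := map_poly (intr : int -> rat) (Hpoly n).

Definition Hseries (N : nat) : {poly {poly rat}} :=
  \sum_(n < N.+1) (HQ n)%:P * yv ^+ n.

Definition gf_num : {poly {poly rat}} := 1 - xv * yv * (1 + yv - yv ^+ 2).
Definition gf_den : {poly {poly rat}} :=
  (1 - yv) * (1 - xv * yv) * (1 - xv * yv - 2%:R * xv * yv ^+ 2).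

Definition hn (n : nat) (x : algC) : algC :=
  let s := sqrtC (2%:R * x) * 'i in
  let a := - s / 4%:R in
  s ^+ n / (2%:R * (1 - 3%:R * x)) *
    (8%:R * (chebT algC n).[a] - 3%:R * (x + 3%:R) * (chebU algC n).[a]).

(* The whole theorem rests on one linear recurrence,
       H_{n+2} = x H_{n+1} + 2x H_n + 1 - x^{n+1},   H_0 = 1, H_1 = 1 + x.
   To obtain it we first derive the binary recurrences of Stern polynomials
   from the fuel-based definition, show that they have nonnegative
   coefficients (so e(2m) = e(m)+1 and e(2m+1) = max(e(m), e(m+1)), and
   |e(m+1) - e(m)| <= 1), and split the partial sums of x^{e(m)} according to
   the parity of m.  Then
   - the generating function identity is a comparison of coefficients of y^k
     in den * sum_n H_n y^n, which for k >= 4 is the recurrence itself;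
   - the explicit formula follows because its right-hand side obeys the same
     recurrence (rescaled Chebyshev values solve the homogeneous part) and the
     same initial values, and second-order recurrences have unique solutions. *)

From HB Require Import structures.
From mathcomp Require Import all_boot all_order all_algebra all_field.
From mathcomp Require Import zify ring.
Import Order.TTheory GRing.Theory Num.Theory.
Local Open Scope ring_scope.

Lemma nat_cases n : (1 < n)%N ->
  (exists2 m, (0 < m)%N & n = m.*2) \/ (exists2 m, (0 < m)%N & n = m.*2.+1).
Proof.
move=> n_gt1; rewrite -(odd_double_half n) in n_gt1 *.
case: (odd n) n_gt1 => /= n_gt1; [right | left]; exists n./2 => //; lia.
Qed.

Lemma stern_aux_even k m : (0 < m)%N ->
  stern_aux k.+1 m.*2 = 'X * stern_aux k m.
Proof.
move=> m_gt0 /=; rewrite odd_double doubleK.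
have -> : (m.*2 == 0%N) = false by lia.
by have -> : (m.*2 == 1%N) = false by lia.
Qed.

Lemma stern_aux_odd k m : (0 < m)%N ->
  stern_aux k.+1 m.*2.+1 = stern_aux k m + stern_aux k m.+1.
Proof.
move=> m_gt0 /=; rewrite odd_double uphalf_double.
by have -> : (m.*2.+1 == 1%N) = false by lia.
Qed.

Lemma stern_aux_fuel k1 k2 n : (n <= k1)%N -> (n <= k2)%N ->
  stern_aux k1 n = stern_aux k2 n.
Proof.
elim: k1 k2 n => [|k1 IH] [|k2] n; rewrite ?leqn0.
- by [].
- by move/eqP->.
- by move=> _ /eqP->.
move=> le1 le2.
case: (ltnP n 2) => [n_lt2 | /nat_cases [[m m_gt0 def_n] | [m m_gt0 def_n]]].
- by case: n n_lt2 {le1 le2} => [|[|]].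
- rewrite def_n !stern_aux_even // (IH k2) //; lia.
- rewrite def_n !stern_aux_odd // (IH k2 m) ?(IH k2 m.+1) //; lia.
Qed.

Lemma stern_even m : (0 < m)%N -> stern m.*2 = 'X * stern m.
Proof.
move=> m_gt0; rewrite /stern (stern_aux_fuel m.*2 m.*2.-1.+1 m.*2); try lia.
by rewrite stern_aux_even // (stern_aux_fuel m.*2.-1 m m) //; lia.
Qed.

Lemma stern_odd m : (0 < m)%N -> stern m.*2.+1 = stern m + stern m.+1.
Proof.
move=> m_gt0; rewrite /stern stern_aux_odd //.
by rewrite (stern_aux_fuel _ m m) ?(stern_aux_fuel _ m.+1 m.+1) //; lia.
Qed.

(* Degrees of Stern polynomials.
   Stern polynomials are nonzero with nonnegative coefficients, so no
   cancellation of leading terms occurs and e(2m+1) = max(e(m), e(m+1)). *)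

Definition nonneg_coefs {R : numDomainType} (p : {poly R}) := forall i, 0 <= p`_i.

Lemma size_nonnegD (R : numDomainType) (p q : {poly R}) :
  nonneg_coefs p -> nonneg_coefs q -> size (p + q) = maxn (size p) (size q).
Proof.
have size_le (a b : {poly R}) : nonneg_coefs a -> nonneg_coefs b ->
    (size a <= size (a + b)%R)%N.
  move=> a_ge0 b_ge0; have [-> | a_neq0] := eqVneq a 0; first by rewrite size_poly0.
  rewrite (polySpred a_neq0) ltnNge; apply/negP => /(nth_default 0) /eqP.
  by rewrite coefD paddr_eq0 // -lead_coefE lead_coef_eq0 (negbTE a_neq0).
move=> p_ge0 q_ge0; apply/eqP; rewrite eqn_leq size_polyD geq_max size_le //.
by rewrite addrC size_le.
Qed.

Lemma stern_pos n : (0 < n)%N -> stern n != 0 /\ nonneg_coefs (stern n).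
Proof.
elim/ltn_ind: n => n IH n_gt0.
case: (ltnP n 2) => [n_lt2 | /nat_cases [[m m_gt0 def_n] | [m m_gt0 def_n]]].
- have -> : n = 1%N by lia.
  by split; [exact: oner_neq0 | move=> [|[|i]]; rewrite coefC].
- have [Bm_neq0 Bm_ge0] : stern m != 0 /\ nonneg_coefs (stern m) by apply: IH; lia.
  rewrite def_n stern_even //; split; first by rewrite mulf_neq0 ?polyX_eq0.
  by move=> i; rewrite coefXM; case: eqP.
- have [Bm_neq0 Bm_ge0] : stern m != 0 /\ nonneg_coefs (stern m) by apply: IH; lia.
  have [_ Bm1_ge0] : stern m.+1 != 0 /\ nonneg_coefs (stern m.+1) by apply: IH; lia.
  rewrite def_n stern_odd //; split; last by move=> i; rewrite coefD addr_ge0.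
  by rewrite -size_poly_gt0 size_nonnegD // leq_max size_poly_gt0 Bm_neq0.
Qed.

Lemma sdeg1 : sdeg 1 = 0%N.
Proof. by rewrite /sdeg /stern /= size_poly1. Qed.

Lemma sdeg_even m : (0 < m)%N -> sdeg m.*2 = (sdeg m).+1.
Proof.
move=> m_gt0; have [Bm_neq0 _] := stern_pos _ m_gt0.
by rewrite /sdeg stern_even // mulrC size_mulX // prednK // size_poly_gt0.
Qed.

Lemma sdeg_odd m : (0 < m)%N -> sdeg m.*2.+1 = maxn (sdeg m) (sdeg m.+1).
Proof.
move=> m_gt0; have [_ Bm_ge0] := stern_pos _ m_gt0.
have [_ Bm1_ge0] := stern_pos _ (ltn0Sn m).
by rewrite /sdeg stern_odd // size_nonnegD //; case: (size _) (size _) => [|a] [|b]; lia.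
Qed.

Lemma sdeg2 : sdeg 2 = 1%N.
Proof. by rewrite -[2%N]/(1.*2) sdeg_even // sdeg1. Qed.

Lemma sdeg_lipschitz k : (0 < k)%N ->
  (sdeg k.+1 <= (sdeg k).+1)%N /\ (sdeg k <= (sdeg k.+1).+1)%N.
Proof.
elim/ltn_ind: k => k IH k_gt0.
case: (ltnP k 2) => [k_lt2 | /nat_cases [[m m_gt0 def_k] | [m m_gt0 def_k]]].
- have -> : k = 1%N by lia.
  by rewrite sdeg2 sdeg1.
- have : (sdeg m.+1 <= (sdeg m).+1)%N /\ (sdeg m <= (sdeg m.+1).+1)%N by apply: IH; lia.
  by rewrite def_k sdeg_odd // sdeg_even //; lia.
- have : (sdeg m.+1 <= (sdeg m).+1)%N /\ (sdeg m <= (sdeg m.+1).+1)%N by apply: IH; lia.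
  by rewrite def_k -doubleS sdeg_odd // sdeg_even //; lia.
Qed.

Lemma sdeg_pow2 n : sdeg (2 ^ n) = n.
Proof. by elim: n => [|n IH]; rewrite ?sdeg1 // expnS mul2n sdeg_even ?IH ?expn_gt0. Qed.

(* Write F(N) = sum_{m=1}^{N} x^e(m), so H_n = F(2^n), and
   P(N) = sum_{k=1}^{N-1} x^max(e(k),e(k+1)).  Splitting F(2N) into even and
   odd indices, and P(2N+2) into consecutive pairs, gives
     F(2N) = x F(N) + 1 + P(N),     P(2N+2) = x F(N) + x F(N+1),
   whence H_{n+2} = x H_{n+1} + 2x H_n + 1 - x^{n+1}.  Powers x^e(m) are
   abstracted before calling [ring], which would otherwise try to compute e. *)

Definition Hpart (N : nat) : {poly int} := \sum_(1 <= m < N.+1) 'X^(sdeg m).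

Definition Hpair (N : nat) : {poly int} :=
  \sum_(1 <= k < N) 'X^(maxn (sdeg k) (sdeg k.+1)).

Lemma Hpart0 : Hpart 0 = 0.
Proof. by rewrite /Hpart big_geq. Qed.

Lemma HpartS N : Hpart N.+1 = Hpart N + 'X^(sdeg N.+1).
Proof. by rewrite /Hpart big_nat_recr. Qed.

Lemma Hpair1 : Hpair 1 = 0.
Proof. by rewrite /Hpair big_geq. Qed.

Lemma HpairS N : (0 < N)%N ->
  Hpair N.+1 = Hpair N + 'X^(maxn (sdeg N) (sdeg N.+1)).
Proof. by move=> N_gt0; rewrite /Hpair big_nat_recr. Qed.

(* Even m = 2k contribute x^{e(k)+1}, m = 1 contributes 1, and odd
   m = 2k+1 > 1 contribute x^{max(e(k), e(k+1))}. *)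
Lemma Hpart_double N : (0 < N)%N -> Hpart N.*2 = 'X * Hpart N + 1 + Hpair N.
Proof.
elim: N => [|[|N] IH] // _.
  by rewrite (HpartS 1) (HpartS 0) Hpart0 Hpair1 sdeg1 sdeg2 expr1 expr0; ring.
rewrite doubleS (HpartS N.+1.*2.+1) (HpartS N.+1.*2) IH // (HpairS N.+1) //.
rewrite sdeg_odd // -doubleS sdeg_even // (HpartS N.+1) (exprS _ (sdeg N.+2)).
set a := 'X^(maxn _ _); set b := 'X^(sdeg N.+2); ring.
Qed.

(* In P(2N+2) each pair (2k, 2k+1) and (2k+1, 2k+2) has maximum e(k)+1,
   resp. e(k+1)+1, by the Lipschitz property of e. *)
Lemma Hpair_double N : Hpair N.+1.*2 = 'X * Hpart N + 'X * Hpart N.+1.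
Proof.
elim: N => [|N IH].
  by rewrite (HpairS 1) // Hpair1 (HpartS 0) Hpart0 sdeg1 sdeg2 expr1 expr0; ring.
have [lip1 lip2] := sdeg_lipschitz _ (ltn0Sn N).
rewrite (doubleS N.+1) (HpairS N.+1.*2.+1) // (HpairS N.+1.*2) // IH.
rewrite sdeg_even // sdeg_odd // -doubleS sdeg_even //.
have -> : maxn (sdeg N.+1).+1 (maxn (sdeg N.+1) (sdeg N.+2)) = (sdeg N.+1).+1 by lia.
have -> : maxn (maxn (sdeg N.+1) (sdeg N.+2)) (sdeg N.+2).+1 = (sdeg N.+2).+1 by lia.
rewrite (HpartS N.+1) (HpartS N) (exprS _ (sdeg N.+1)) (exprS _ (sdeg N.+2)).
set a := 'X^(sdeg N.+1); set b := 'X^(sdeg N.+2); ring.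
Qed.

Lemma Hpoly_rec n :
  Hpoly n.+2 = 'X * Hpoly n.+1 + 2%:R * 'X * Hpoly n + 1 - 'X^(n.+1).
Proof.
rewrite -[Hpoly _]/(Hpart _) -[Hpoly n.+1]/(Hpart _) -[Hpoly n]/(Hpart _).
rewrite !expnS !mul2n; have := sdeg_pow2 n; have := expn_gt0 2 n.
case: (2 ^ n)%N => [|N] // _ sdegN.
rewrite Hpart_double // Hpair_double (HpartS N) sdegN (exprS _ n).
set a := 'X^n; ring.
Qed.

Lemma Hpoly0 : Hpoly 0 = 1.
Proof. by rewrite -[Hpoly _]/(Hpart 1) HpartS Hpart0 sdeg1 add0r. Qed.

Lemma Hpoly1 : Hpoly 1 = 1 + 'X.
Proof. by rewrite -[Hpoly _]/(Hpart 2) (HpartS 1) (HpartS 0) Hpart0 sdeg1 sdeg2 add0r. Qed.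

Lemma Hmap_rec (R : comNzRingType) n :
  map_poly (intr : int -> R) (Hpoly n.+2) =
    'X * map_poly intr (Hpoly n.+1) + 2%:R * 'X * map_poly intr (Hpoly n)
    + 1 - 'X^(n.+1).
Proof.
by rewrite Hpoly_rec !(rmorphB, rmorphD, rmorphM, rmorph1, rmorph_nat, rmorphXn)
  /= map_polyX.
Qed.

Lemma Hmap0 (R : comNzRingType) : map_poly (intr : int -> R) (Hpoly 0) = 1.
Proof. by rewrite Hpoly0 rmorph1. Qed.

Lemma Hmap1 (R : comNzRingType) :
  map_poly (intr : int -> R) (Hpoly 1) = 1 + 'X.
Proof. by rewrite Hpoly1 rmorphD rmorph1 /= map_polyX. Qed.

(* Multiplying sum_n H_n y^n by the denominator and comparing coefficients of
   y^k reduces, for k >= 4, to the recurrence for H_{k}, H_{k-1}, H_{k-2}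
   (the numerator has degree 3 in y), and for k <= 3 to the initial values. *)

Lemma HQ_rec n : HQ n.+2 = 'X * HQ n.+1 + 2%:R * 'X * HQ n + 1 - 'X^(n.+1).
Proof. exact: Hmap_rec. Qed.

Lemma HQ0 : HQ 0 = 1.
Proof. exact: Hmap0. Qed.

Lemma HQ1 : HQ 1 = 1 + 'X.
Proof. exact: Hmap1. Qed.

Lemma coef_Hseries N k : (k <= N)%N -> (Hseries N)`_k = HQ k.
Proof.
have -> : Hseries N = \poly_(i < N.+1) HQ i.
  by rewrite poly_def; apply: eq_bigr => i _; rewrite mul_polyC.
by rewrite coef_poly ltnS => ->.
Qed.

Lemma gf_den_expand : gf_den =
  1%:P * yv ^+ 0 + (- (1 + 2%:R * 'X))%:P * yv ^+ 1 + ('X ^+ 2)%:P * yv ^+ 2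
  + (2%:R * 'X + 'X ^+ 2)%:P * yv ^+ 3 + (- (2%:R * 'X ^+ 2))%:P * yv ^+ 4.
Proof.
rewrite /gf_den /xv !(polyCN, polyCD, polyCM, polyC_exp, polyC_natr).
set X := ('X : {poly rat})%:P; set Y := yv; ring.
Qed.

Lemma gf_num_expand : gf_num =
  1%:P * yv ^+ 0 + (- 'X)%:P * yv ^+ 1 + (- 'X)%:P * yv ^+ 2 + 'X%:P * yv ^+ 3.
Proof.
rewrite /gf_num /xv !polyCN.
set X := ('X : {poly rat})%:P; set Y := yv; ring.
Qed.

Lemma coef_monomial (R : nzRingType) (c : R) i k :
  (c%:P * 'X^i)`_k = if k == i then c else 0.
Proof. by rewrite coefCM coefXn; case: eqP; rewrite ?mulr1 ?mulr0. Qed.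

Lemma coef_monomialM (R : nzRingType) (c : R) i (S : {poly R}) k :
  (c%:P * 'X^i * S)`_k = if (i <= k)%N then c * S`_(k - i) else 0.
Proof. by rewrite -mulrA coefCM coefXnM; case: ltnP; rewrite ?mulr0. Qed.

Lemma gf_identity N k : (k <= N)%N -> (gf_den * Hseries N)`_k = gf_num`_k.
Proof.
move=> le_kN; rewrite gf_den_expand gf_num_expand /yv.
rewrite !mulrDl !coefD !coef_monomialM !coef_monomial.
have coefH j : (j <= k)%N -> (Hseries N)`_j = HQ j.
  by move=> le_jk; apply: coef_Hseries; lia.
case: k le_kN coefH => [|[|[|[|k]]]] _ coefH /=.
all: rewrite ?subSS ?subn0 !coefH //; try lia.
- by rewrite HQ0; ring.
- by rewrite HQ0 HQ1; ring.
- by rewrite HQ_rec HQ0 HQ1; ring.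
- by rewrite !HQ_rec HQ0 HQ1; ring.
rewrite (HQ_rec k.+2) (HQ_rec k.+1) (HQ_rec k) !exprS.
by set a := HQ k.+1; set b := HQ k; set c := 'X^k; ring.
Qed.

(* If t_n satisfies the Chebyshev recurrence t_{n+2} = 2a t_{n+1} - t_n, then
   w_n = s^n t_n satisfies w_{n+2} = 2as w_{n+1} - s^2 w_n.  With
   s = sqrt(2x) i and a = -s/4 this is w_{n+2} = x w_{n+1} + 2x w_n, the
   homogeneous part of the recurrence of H_n; the constant 1/(1-3x) and the
   term x^n/2 are particular solutions for the inhomogeneous terms 1 and
   -x^{n+1}. *)

Lemma cheb_pair_rec (R : nzRingType) (a0 a1 : {poly R}) n :
  (cheb_pair a0 a1 n.+2).1 =
    2%:R *: 'X * (cheb_pair a0 a1 n.+1).1 - (cheb_pair a0 a1 n).1.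
Proof. by rewrite /=; case: (cheb_pair a0 a1 n). Qed.

Lemma scaled_cheb_rec (R : comNzRingType) (a0 a1 : {poly R}) (s a : R) n :
  s ^+ n.+2 * (cheb_pair a0 a1 n.+2).1.[a] =
    2%:R * a * s * (s ^+ n.+1 * (cheb_pair a0 a1 n.+1).1.[a])
    - s ^+ 2 * (s ^+ n * (cheb_pair a0 a1 n).1.[a]).
Proof.
rewrite cheb_pair_rec hornerD hornerN hornerM hornerZ hornerX !exprS.
by set t1 := _.[a]; set t0 := (cheb_pair a0 a1 n).1.[a]; ring.
Qed.

Definition hn_scale (x : algC) : algC := sqrtC (2%:R * x) * 'i.

Lemma hn_scale_sq x : hn_scale x ^+ 2 = - (2%:R * x).
Proof. by rewrite exprMn sqrtCK sqrCi mulrN1. Qed.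

Lemma hn_scale_node x : 2%:R * (- hn_scale x / 4%:R) * hn_scale x = x.
Proof.
have -> : 2%:R * (- hn_scale x / 4%:R) * hn_scale x = - hn_scale x ^+ 2 / 2%:R.
  by rewrite expr2; field.
by rewrite hn_scale_sq opprK mulrC mulKf // pnatr_eq0.
Qed.

Lemma hnE n x : hn n x = (2%:R * (1 - 3%:R * x))^-1 *
  (8%:R * (hn_scale x ^+ n * (chebT algC n).[- hn_scale x / 4%:R])
   - 3%:R * (x + 3%:R) * (hn_scale x ^+ n * (chebU algC n).[- hn_scale x / 4%:R])).
Proof.
rewrite /hn -/(hn_scale x).
move: (hn_scale x) (chebT _ n) (chebU _ n) => s T U.
by move: T.[_] U.[_] => t u; ring.
Qed.

Lemma hn_rec n x : hn n.+2 x = x * hn n.+1 x + 2%:R * x * hn n x.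
Proof.
rewrite !hnE /chebT /chebU !scaled_cheb_rec hn_scale_node hn_scale_sq.
move: (hn_scale x ^+ _ * _) (hn_scale x ^+ _ * _) (hn_scale x ^+ _ * _)
  (hn_scale x ^+ _ * _) => t1 t0 u1 u0; ring.
Qed.

Lemma rec2_unique {T : Type} (step : nat -> T -> T -> T) (u v : nat -> T) :
  u 0 = v 0 -> u 1 = v 1 ->
  (forall n, u n.+2 = step n (u n.+1) (u n)) ->
  (forall n, v n.+2 = step n (v n.+1) (v n)) ->
  forall n, u n = v n.
Proof.
move=> eq0 eq1 u_rec v_rec n.
suff: u n = v n /\ u n.+1 = v n.+1 by case.
elim: n => [|n [IH0 IH1]]; first by split.
by split=> //; rewrite u_rec v_rec IH0 IH1.
Qed.

Definition Hstep (x : algC) (n : nat) (h1 h0 : algC) : algC :=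
  x * h1 + 2%:R * x * h0 + 1 - x ^+ n.+1.

Lemma Heval_rec n (x : algC) :
  (map_poly (intr : int -> algC) (Hpoly n.+2)).[x] =
    Hstep x n (map_poly intr (Hpoly n.+1)).[x] (map_poly intr (Hpoly n)).[x].
Proof.
rewrite Hmap_rec /Hstep.
by rewrite !(hornerD, hornerN, hornerM, hornerX, hornerXn, hornerC, hornerMn).
Qed.

Section ClosedForm.
Variable x : algC.
Hypothesis x_ok : 1 - 3%:R * x != 0.

Definition Hclosed (n : nat) : algC :=
  (1 - 3%:R * x)^-1 + 2%:R^-1 * x ^+ n + hn n x.

Lemma Hclosed_rec n : Hclosed n.+2 = Hstep x n (Hclosed n.+1) (Hclosed n).
Proof.
rewrite /Hclosed /Hstep hn_rec !exprS.
by move: (hn n.+1 x) (hn n x) (x ^+ n) => h1 h0 xn; field.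
Qed.

Lemma Hclosed0 : Hclosed 0 = 1.
Proof. by rewrite /Hclosed hnE /chebT /chebU /= hornerC expr0 !mulr1; field. Qed.

Lemma Hclosed1 : Hclosed 1 = 1 + x.
Proof.
rewrite /Hclosed hnE /chebT /chebU /= hornerZ hornerX !expr1.
have node := hn_scale_node x; move: (hn_scale x) node => s node.
have -> : s * (- s / 4%:R) = x / 2%:R.
  by rewrite -node; field.
have -> : s * (2%:R * (- s / 4%:R)) = x by rewrite -node; ring.
by field.
Qed.

End ClosedForm.

Theorem mainTheorem6 :
  (* generating function identity of formal power series in y over Q(x):
     den * (sum_n H_n y^n) = num, checked on every truncation *)
  (forall N k : nat, (k <= N)%N ->
     (gf_den * Hseries N)`_k = gf_num`_k)
  /\
  (* explicit formula, as an identity of rational functions in x,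
     checked at every complex point x where it is defined *)
  (forall (n : nat) (x : algC), 1 - 3%:R * x != 0 ->
     (map_poly (intr : int -> algC) (Hpoly n)).[x] =
       (1 - 3%:R * x)^-1 + 2%:R^-1 * x ^+ n + hn n x).
Proof.
split; first exact: gf_identity.
move=> n x x_ok.
pose Heval m := (map_poly (intr : int -> algC) (Hpoly m)).[x].
change (Heval n = Hclosed x n).
apply: (rec2_unique (Hstep x)).
- by rewrite /Heval Hmap0 hornerC Hclosed0.
- by rewrite /Heval Hmap1 hornerD hornerC hornerX Hclosed1.
- by move=> m; apply: Heval_rec.
- exact: Hclosed_rec.
Qed.
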